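(* Consider a two-player perfect-information game with exact Enforceable Payoff Frontiers $U_s$, minimum required incentives $\tau$, truncation thresholds $\beta$ and bounds $\underline V,\overline V$ as defined in the context. Let $\{\tilde U_s\}_{s\in\mathcal S}$ be any family of learned EPFs as in the context, and let $\tilde\pi$ be the strategy induced by $\{\tilde U_s\}$. Then $\tilde\pi$ is incentive compatible in the following sense. Let $s\in\mathcal S_2$ be a follower state reached with some promise, and let $a\in\mathcal A(s)$ be an action that $\tilde\pi$ recommends at $s$ with positive probability, carrying promise $\mu'$ to the child $T(a;s)$. Then the follower's expected payoff from $T(a;s)$ onward when play continues according to $\tilde\pi$ with promise $\mu'$ is at least $\tau(T(a;s))$.
   Context: A two-player perfect-information game is a finite rooted tree whose vertices are the states $s\in\mathcal S$. The leaves $\mathcal L\subseteq\mathcal S$ carry payoffs $r_1(\ell),r_2(\ell)\in\mathbb R$ for player $\mathsf P_1$ (the leader) and player $\mathsf P_2$ (the follower). Every non-leaf state belongs to exactly one of $\mathcal S_1$ (leader states) or $\mathcal S_2$ (follower states). The actions $\mathcal A(s)$ at $s$ are the edges from $s$ to its children; $\mathcal C(s)$ is the set of children and $T(a;s)$ is the child reached by action $a$. Define $\underline V,\overline V:\mathcal S\to\mathbb R$ by backward induction (they are the follower's payoffs under the leader's grim strategy and under the joint altruistic strategy): - for a leaf $\ell$: $\underline V(\ell)=\overline V(\ell)=r_2(\ell)$; - for $s\in\mathcal S_1$: $\underline V(s)=\min_{s'\in\mathcal C(s)}\underline V(s')$; - for $s\in\mathcal S_2$: $\underline V(s)=\max_{s'\in\mathcal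 C(s)}\underline V(s')$; - for every non-leaf $s$: $\overline V(s)=\max_{s'\in\mathcal C(s)}\overline V(s')$. For $s\in\mathcal S_2$ and $s'\in\mathcal C(s)$, the minimum required incentive is $\tau(s')=\max_{s^!\in\mathcal C(s),\,s^!\neq s'}\underline V(s^!)$. Let $\beta(s')=\tau(s')$ if the parent of $s'$ lies in $\mathcal S_2$, and $\beta(s')=-\infty$ if the parent lies in $\mathcal S_1$. For functions $g:\mathbb R\to\mathbb R\cup\{-\infty\}$: - the upper concave envelope $\bigwedge_i g_i$ of finitely many such functions is the pointwise infimum of all concave $h$ with $h\ge\max_i g_i$; - the left truncation is $[g\triangleright t](\mu)=g(\mu)$ if $\mu\ge t$ and $-\infty$ otherwise (so $g\triangleright(-\infty)=g$). Exact EPFs: for a leaf $\ell$, $U_\ell(\mu)=r_1(\ell)$ if $\mu=r_2(\ell)$ and $-\infty$ otherwise; for a non-leaf $s$, $U_s=\bigwedge_{s'\in\mathcal C(s)}(U_{s'}\triangleright\beta(s'))$. Learned EPFs: a family $\{\tilde U_s\}_{s\in\mathcal S}$ with $\tilde U_\ell=U_\ell$ for leaves. For each non-leaf $s$, $\tilde U_s$ is a piecewise linear function, given as the linear interpolation of finitely many points whose $x$-coordinates lie in $[\underline V(s),\overline V(s)]$ and include both endpoints. It is real-valued on $[\underline V(s),\overline V(s)]$ and equal to $-\infty$ outside this interval. Induced strategy $\tilde\pi$: play starts at the root with promise $\mu_{\mathrm{root}}\in\arg\max_\mu\tilde U_{\mathrm{root}}(\mu)$. At a non-leaf state $s$ reached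 with promise $\mu$, choose a maximizer $(s',s'',t,\mu',\mu'')$, subject to $s',s''\in\mathcal C(s)$, $t\in[0,1]$ and $t\mu'+(1-t)\mu''=\mu$, of $$t\,[\tilde U_{s'}\triangleright\beta(s')](\mu')+(1-t)\,[\tilde U_{s''}\triangleright\beta(s'')](\mu'').$$ Then move to $s'$ with probability $t$ carrying promise $\mu'$, and to $s''$ with probability $1-t$ carrying promise $\mu''$. At leader states this is the leader's mixed action; at follower states it is the action the leader recommends to the follower, who follows recommendations. *)

From HB Require Import structures.
From mathcomp Require Import all_boot all_order all_algebra.
From mathcomp Require Import reals constructive_ereal.

Set Implicit Arguments.
Unset Strict Implicit.
Unset Printing Implicit Defensive.

Import Order.TTheory GRing.Theory Num.Theory.
Local Open Scope ring_scope.
Local Open Scope ereal_scope.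

(* A finite two-player perfect-information game tree.
   [Leaf r1 r2] : a leaf with payoffs r1 (leader P1) and r2 (follower P2).
   [Node b c cs] : a non-leaf state with (nonempty) list of children c :: cs;
   b = true means the state is a leader state (S_1), b = false a follower
   state (S_2).  Action k at a node leads to its k-th child.
   States of a game G are identified with their addresses (seq nat, the list
   of child indices from the root). *)
Inductive game (R : Type) : Type :=
| Leaf of R & R
| Node of bool & game R & seq (game R).

Section Game.
Variable R : realType.

Definition children (g : game R) : seq (game R) :=
  if g is Node _ c cs then c :: cs else [::].

Definition is_leaf (g : game R) : bool := if g is Leaf _ _ then true else false.

Fixpoint subgame (g : game R) (p : seq nat) : option (game R) :=
  match p with
  | [::] => Some g
  | i :: p' => if (i < size (children g))%N
               then subgame (nth g (children g) i) p' else None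
  end.

Fixpoint lowV (g : game R) : R :=
  match g with
  | Leaf _ r2 => r2
  | Node b c cs =>
      if b then foldr Num.min (lowV c) (map lowV cs)
      else foldr Num.max (lowV c) (map lowV cs)
  end.

Fixpoint upV (g : game R) : R :=
  match g with
  | Leaf _ r2 => r2
  | Node _ c cs => foldr Num.max (upV c) (map upV cs)
  end.

Definition tau_ch (g : game R) (i : nat) : \bar R :=
  let sib := take i (children g) ++ drop i.+1 (children g) in
  foldr (fun x acc => Order.max x acc) -oo [seq (lowV h)%:E | h <- sib].

Definition beta_ch (g : game R) (i : nat) : \bar R :=
  if g is Node false _ _ then tau_ch g i else -oo.

Definition trunc (f : R -> \bar R) (t : \bar R) (mu : R) : \bar R :=
  if t <= mu%:E then f mu else -oo.

Definition leafU (r1 r2 : R) (mu : R) : \bar R :=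
  if mu == r2 then r1%:E else -oo.

Definition is_pl_interp (lo hi : R) (f : R -> \bar R) : Prop :=
  exists xs ys : seq R,
    [/\ size xs = size ys, (0 < size xs)%N, sorted <%R xs,
        head 0%R xs = lo & last 0%R xs = hi] /\
    [/\ (forall mu, (mu < lo)%R \/ (hi < mu)%R -> f mu = -oo),
        (forall k, (k < size xs)%N -> f xs`_k = (ys`_k)%:E) &
        (forall k mu, (k.+1 < size xs)%N -> (xs`_k <= mu <= xs`_k.+1)%R ->
           f mu = (ys`_k + (mu - xs`_k) / (xs`_k.+1 - xs`_k)
                            * (ys`_k.+1 - ys`_k))%:E)].

Definition learned_epfs (G : game R) (Ut : seq nat -> R -> \bar R) : Prop :=
  forall p g, subgame G p = Some g ->
    match g with
    | Leaf r1 r2 => forall mu, Ut p mu = leafU r1 r2 mu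
    | Node _ _ _ => is_pl_interp (lowV g) (upV g) (Ut p)
    end.

(* a choice (s', s'', t, mu', mu'') at a state: child indices ci, cj,
   probability ct of going to ci, promises cmu1, cmu2 *)
Record choice := Choice { ci : nat; cj : nat; ct : R; cmu1 : R; cmu2 : R }.

Definition admissible (g : game R) (mu : R) (c : choice) : Prop :=
  [/\ (ci c < size (children g))%N, (cj c < size (children g))%N,
      (0 <= ct c <= 1)%R & (ct c * cmu1 c + (1 - ct c) * cmu2 c = mu)%R].

(* t [Ut_{s'} |> beta(s')](mu') + (1-t) [Ut_{s''} |> beta(s'')](mu'')
   (with the extended-real convention 0 * -oo = 0) *)
Definition objective (Ut : seq nat -> R -> \bar R) (p : seq nat) (g : game R)
    (c : choice) : \bar R :=
  (ct c)%:E * trunc (Ut (rcons p (ci c))) (beta_ch g (ci c)) (cmu1 c)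
  + (1 - ct c)%:E * trunc (Ut (rcons p (cj c))) (beta_ch g (cj c)) (cmu2 c).

Definition is_maximizer (Ut : seq nat -> R -> \bar R) (p : seq nat)
    (g : game R) (mu : R) (c : choice) : Prop :=
  admissible g mu c /\
  forall c', admissible g mu c' -> objective Ut p g c' <= objective Ut p g c.

(* A strategy of the promise-based form: root promise mu0 and, at each
   state (address p) reached with promise mu, the choice sigma p mu. *)
Inductive reached (G : game R) (sigma : seq nat -> R -> choice) (mu0 : R)
  : seq nat -> R -> Prop :=
| reached_root : reached G sigma mu0 [::] mu0
| reached_l p mu g : reached G sigma mu0 p mu -> subgame G p = Some g ->
    ~~ is_leaf g -> (0 < ct (sigma p mu))%R ->
    reached G sigma mu0 (rcons p (ci (sigma p mu))) (cmu1 (sigma p mu))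
| reached_r p mu g : reached G sigma mu0 p mu -> subgame G p = Some g ->
    ~~ is_leaf g -> (ct (sigma p mu) < 1)%R ->
    reached G sigma mu0 (rcons p (cj (sigma p mu))) (cmu2 (sigma p mu)).

Definition induced_strategy (G : game R) (Ut : seq nat -> R -> \bar R)
    (mu0 : R) (sigma : seq nat -> R -> choice) : Prop :=
  (forall mu, Ut [::] mu <= Ut [::] mu0) /\
  (forall p mu g, reached G sigma mu0 p mu -> subgame G p = Some g ->
     ~~ is_leaf g -> is_maximizer Ut p g mu (sigma p mu)).

Definition recommends (c : choice) (a : nat) (mu' : R) : Prop :=
  [/\ a = ci c, (0 < ct c)%R & mu' = cmu1 c] \/
  [/\ a = cj c, (ct c < 1)%R & mu' = cmu2 c].

Fixpoint fpay (sigma : seq nat -> R -> choice) (g : game R) (p : seq nat)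
    (mu : R) {struct g} : R :=
  match g with
  | Leaf _ r2 => r2
  | Node _ c cs =>
      let fix go (k : nat) (l : seq (game R)) : seq (R -> R) :=
        match l with
        | [::] => [::]
        | h :: l' => (fun m => fpay sigma h (rcons p k) m) :: go k.+1 l'
        end in
      let fs := (fun m => fpay sigma c (rcons p 0%N) m) :: go 1%N cs in
      let ch := sigma p mu in
      (ct ch * nth (fun _ => 0%R) fs (ci ch) (cmu1 ch)
       + (1 - ct ch) * nth (fun _ => 0%R) fs (cj ch) (cmu2 ch))%R
  end.

End Game.

(* Promise keeping: at every state reached by the induced strategy, the
   follower's continuation payoff equals the promise carried there.  The
   objective of the maximizer at a reached state is finite, since mixing the
   child realizing [lowV] (promised [lowV]) with the child realizing [upV]
   (promised [upV]) is admissible and clears every truncation threshold, all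
   of which are at most [lowV].  Hence each branch played with positive
   probability carries a promise in the support of its learned EPF and above
   its threshold; at a leaf that support is the follower's payoff alone, which
   gives promise keeping by induction.  At a follower state the threshold is
   [tau]. *)
From Pilot Require Import Defs.
From HB Require Import structures.
From mathcomp Require Import all_boot all_order all_algebra.
From mathcomp Require Import reals constructive_ereal.
From mathcomp Require Import ring lra.
Import Order.TTheory GRing.Theory Num.Theory.
Local Open Scope ring_scope.

Section FoldrMax.
Context {disp : Order.disp_t} {T : orderType disp}.
Implicit Types (x y v : T) (s : seq T).
Local Open Scope order_scope.

Lemma foldr_max_mem x s : foldr Order.max x s \in x :: s.
Proof.
elim: s => [|y s IH] /=; first by rewrite mem_seq1.
rewrite !inE; case: (leP y (foldr Order.max x s)) => _; last by rewrite eqxx orbT.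
by move: IH; rewrite inE => /orP[|] ->; rewrite ?orbT.
Qed.

Lemma foldr_min_mem x s : foldr Order.min x s \in x :: s.
Proof.
elim: s => [|y s IH] /=; first by rewrite mem_seq1.
rewrite !inE; case: (leP y (foldr Order.min x s)) => _; first by rewrite eqxx orbT.
by move: IH; rewrite inE => /orP[|] ->; rewrite ?orbT.
Qed.

Lemma le_foldr_max x s y : y \in x :: s -> y <= foldr Order.max x s.
Proof.
elim: s => [|z s IH] /=; first by rewrite mem_seq1 => /eqP->.
rewrite le_max !inE => /or3P[Hy|/eqP->|Hy]; first by rewrite IH ?orbT // inE Hy.
  by rewrite lexx.
by rewrite IH ?orbT // inE Hy orbT.
Qed.

Lemma foldr_max_le x s v :
  x <= v -> (forall y, y \in s -> y <= v) -> foldr Order.max x s <= v.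
Proof.
move=> xv; elim: s => [|y s IH] sv //=.
by rewrite ge_max sv ?mem_head //= IH // => z zs; rewrite sv // inE zs orbT.
Qed.

End FoldrMax.

Lemma convex_weight {R : realFieldType} (lo hi mu : R) :
  lo <= mu <= hi -> exists2 t : R, 0 <= t <= 1 & t * lo + (1 - t) * hi = mu.
Proof.
case/andP=> lo_mu mu_hi; have [lt_lohi|] := ltP lo hi.
  have hi_lo : hi - lo != 0 by rewrite subr_eq0 gt_eqF.
  exists ((hi - mu) / (hi - lo)); last by field.
  rewrite divr_ge0 ?subr_ge0 ?(ltW lt_lohi) //= ler_pdivrMr ?subr_gt0 // mul1r; lra.
move=> le_hilo; exists 1; first by rewrite ler01 lexx.
rewrite subrr mul0r addr0 mul1r; apply/eqP; rewrite eq_le lo_mu.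
exact: le_trans mu_hi le_hilo.
Qed.

Local Open Scope ereal_scope.

Lemma weighted_sum_neqNy {R : realDomainType} (t : R) (x y : \bar R) :
  t%:E * x + (1 - t)%:E * y != -oo ->
  ((0 < t)%R -> x != -oo) /\ ((t < 1)%R -> y != -oo).
Proof.
move=> H; split => Ht; apply: contraNneq H => ->.
  by rewrite mulrNy gtr0_sg // mul1e addNye.
by rewrite mulrNy gtr0_sg ?subr_gt0 // mul1e addeNy.
Qed.

Lemma trunc_neqNy {R : realType} (f : R -> \bar R) (t : \bar R) (m : R) :
  trunc f t m != -oo -> t <= m%:E /\ f m != -oo.
Proof. by rewrite /trunc; case: ifP. Qed.

Section GameTree.
Context {R : realType}.
Implicit Types (G g c : game R) (cs : seq (game R)) (p : seq nat).

Fixpoint game_nth_ind (P : game R -> Prop)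
  (HL : forall r1 r2, P (Leaf r1 r2))
  (HN : forall b c cs,
     (forall k, (k < size (c :: cs))%N -> P (nth c (c :: cs) k)) ->
     P (Node b c cs))
  g {struct g} : P g :=
  match g with
  | Leaf r1 r2 => HL r1 r2
  | Node b c cs =>
      HN b c cs
        ((fix children_P (l : seq (game R)) :
              forall k, (k < size l)%N -> P (nth c l k) :=
            match l return forall k, (k < size l)%N -> P (nth c l k) with
            | [::] => fun k Hk => False_ind _ (notF Hk)
            | h :: l' => fun k =>
                match k return (k < size (h :: l'))%N -> P (nth c (h :: l') k) with
                | 0 => fun _ => game_nth_ind P HL HN h
                | k'.+1 => fun Hk => children_P l' k' Hk
                end
            end) (c :: cs))
  end.

Lemma subgame_child {G p b c cs k} :
  subgame G p = Some (Node b c cs) -> (k < size (c :: cs))%N ->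
  subgame G (rcons p k) = Some (nth c (c :: cs) k).
Proof.
elim: p G => [|i p IH] G /=; last by case: ifP => // _; apply: IH.
by move=> [->] /= Hk; rewrite Hk (set_nth_default c).
Qed.

Lemma lowV_mem g : ~~ is_leaf g -> lowV g \in map (@lowV R) (children g).
Proof. by case: g => // -[] c cs _; [exact: foldr_min_mem | exact: foldr_max_mem]. Qed.

Lemma upV_mem g : ~~ is_leaf g -> upV g \in map (@upV R) (children g).
Proof. by case: g => // b c cs _; exact: foldr_max_mem. Qed.

Lemma beta_ch_le_lowV g k : ~~ is_leaf g -> beta_ch g k <= (lowV g)%:E.
Proof.
case: g => // -[] c cs _; first exact: leNye.
rewrite /beta_ch /tau_ch (map_comp EFin (@lowV R)) /=.
apply: foldr_max_le => [|_ /mapP[y ys ->]]; first exact: leNye.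
rewrite lee_fin; apply: le_foldr_max.
move: ys; rewrite map_cat mem_cat map_take map_drop => /orP[/mem_take //|/mem_drop].
by rewrite inE => ->; rewrite orbT.
Qed.

(* The local [fix] in the body of [fpay], named so that it can be reasoned about. *)
Definition fpay_children (sigma : seq nat -> R -> choice R) p :=
  fix go (k : nat) (l : seq (game R)) : seq (R -> R) :=
  match l with
  | [::] => [::]
  | h :: l' => (fun m => fpay sigma h (rcons p k) m) :: go k.+1 l'
  end.

Lemma nth_fpay_children sigma p l k i d x : (i < size l)%N ->
  nth d (fpay_children sigma p k l) i = fpay sigma (nth x l i) (rcons p (k + i)%N).
Proof.
elim: l k i => [|h l IH] k [|i] //= Hi; first by rewrite addn0.
by rewrite (IH _ _ Hi) addSnnS.
Qed.

Lemma fpay_node sigma b c cs p mu (ch := sigma p mu) :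
  (ci ch < size (c :: cs))%N -> (cj ch < size (c :: cs))%N ->
  fpay sigma (Node b c cs) p mu =
    (ct ch * fpay sigma (nth c (c :: cs) (ci ch)) (rcons p (ci ch)) (cmu1 ch)
     + (1 - ct ch) * fpay sigma (nth c (c :: cs) (cj ch)) (rcons p (cj ch)) (cmu2 ch))%R.
Proof.
have nth_fs k m : (k < size (c :: cs))%N ->
    nth (fun _ => 0%R) ((fun m => fpay sigma c (rcons p 0%N) m)
                        :: fpay_children sigma p 1 cs) k m
    = fpay sigma (nth c (c :: cs) k) (rcons p k) m.
  by case: k => [|k] //= Hk; rewrite (nth_fpay_children _ _ _ _ _ _ c).
by move=> Hi Hj; rewrite /= -/(fpay_children sigma p) !nth_fs.
Qed.

Lemma recommends_lt {g mu ch a mu'} :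
  admissible g mu ch -> recommends ch a mu' -> (a < size (children g))%N.
Proof. by case=> Hi Hj _ _ [[->]|[->]]. Qed.

Lemma reached_child {G sigma mu0 p mu g a mu'} :
  reached G sigma mu0 p mu -> subgame G p = Some g -> ~~ is_leaf g ->
  recommends (sigma p mu) a mu' -> reached G sigma mu0 (rcons p a) mu'.
Proof.
move=> Hr Hp Hnl [[-> Ht ->]|[-> Ht ->]].
  exact: reached_l Hr Hp Hnl Ht.
exact: reached_r Hr Hp Hnl Ht.
Qed.

End GameTree.

Section LearnedEPFs.
Context {R : realType} {G : game R} {Ut : seq nat -> R -> \bar R}.
Hypothesis learnedUt : learned_epfs G Ut.

Lemma learned_epf_endpoints_fin {q h} : subgame G q = Some h ->
  Ut q (lowV h) \is a fin_num /\ Ut q (upV h) \is a fin_num.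
Proof.
move=> Hq; have := learnedUt _ _ Hq; case: h Hq => [r1 r2|b c cs] Hq.
  by move=> ->; rewrite /leafU eqxx.
move=> [xs [ys [[_ xs_gt0 _ xs_head xs_last] [_ Ut_xs _]]]].
by rewrite -xs_head -xs_last -nth0 -nth_last !Ut_xs ?prednK.
Qed.

Lemma learned_epf_support {q h mu} : subgame G q = Some h -> Ut q mu != -oo ->
  (lowV h <= mu <= upV h)%R.
Proof.
move=> Hq; have := learnedUt _ _ Hq; case: h Hq => [r1 r2|b c cs] Hq /=.
  move=> Ut_leaf; rewrite Ut_leaf /leafU.
  by case: ifP => [/eqP -> _|_]; rewrite ?lexx ?eqxx.
move=> [xs [ys [_ [Ut_out _ _]]]] Ut_mu.
by apply/andP; split; rewrite leNgt; apply: contra Ut_mu => out;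
  rewrite Ut_out ?eqxx //; [left | right].
Qed.

Lemma exists_finite_choice {p b c cs mu} (g := Node b c cs) :
  subgame G p = Some g -> (lowV g <= mu <= upV g)%R ->
  exists2 ch, admissible g mu ch & objective Ut p g ch \is a fin_num.
Proof.
move=> Hp mu_in; have nl : ~~ is_leaf g by [].
have /(nthP (lowV c))[k1] := lowV_mem g nl.
rewrite size_map => k1_lt; rewrite (nth_map c) // => E1.
have /(nthP (upV c))[k2] := upV_mem g nl.
rewrite size_map => k2_lt; rewrite (nth_map c) // => E2.
have [t t01 t_mu] := convex_weight _ _ _ mu_in.
have [lo_fin _] := learned_epf_endpoints_fin (subgame_child Hp k1_lt).
have [_ hi_fin] := learned_epf_endpoints_fin (subgame_child Hp k2_lt).
exists (Defs.Choice k1 k2 t (lowV g) (upV g)); first by split.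
have lo_hi : (lowV g <= upV g)%R by case/andP: mu_in; exact: le_trans.
rewrite E1 in lo_fin; rewrite E2 in hi_fin.
rewrite /objective /trunc /= (beta_ch_le_lowV _ _ nl).
by rewrite (le_trans (beta_ch_le_lowV _ _ nl)) ?lee_fin // fin_numD !fin_numM.
Qed.

Lemma maximizer_recommends_feasible {p g mu ch a mu'} :
  subgame G p = Some g -> ~~ is_leaf g -> Ut p mu != -oo ->
  is_maximizer Ut p g mu ch -> recommends ch a mu' ->
  trunc (Ut (rcons p a)) (beta_ch g a) mu' != -oo.
Proof.
case: g => // b c cs Hp _ Ut_mu [_ ch_max].
have [ch' ch'_adm ch'_fin] :=
  exists_finite_choice Hp (learned_epf_support Hp Ut_mu).
have : objective Ut p (Node b c cs) ch != -oo.
  apply: contraTneq (ch_max _ ch'_adm) => ->.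
  by rewrite leeNy_eq; case/fin_numP: ch'_fin.
by case/weighted_sum_neqNy => Hci Hcj [[-> /Hci + ->]|[-> /Hcj + ->]].
Qed.

End LearnedEPFs.

Section InducedStrategy.
Context {R : realType} {G : game R} {Ut : seq nat -> R -> \bar R}.
Context {mu0 : R} {sigma : seq nat -> R -> choice R}.
Hypotheses (learnedUt : learned_epfs G Ut)
           (induced : induced_strategy G Ut mu0 sigma).

Lemma reached_epf_neqNy {p mu g} : reached G sigma mu0 p mu ->
  subgame G p = Some g -> Ut p mu != -oo.
Proof.
have step p' m g' a mu' : reached G sigma mu0 p' m -> subgame G p' = Some g' ->
    ~~ is_leaf g' -> Ut p' m != -oo -> recommends (sigma p' m) a mu' ->
    Ut (rcons p' a) mu' != -oo.
  move=> Hr Hp nl Um /(maximizer_recommends_feasible learnedUt Hp nl Um).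
  by move=> /(_ (induced.2 _ _ _ Hr Hp nl)) /trunc_neqNy[].
move=> Hr; elim: Hr g => [|p' m g' Hr IH Hp nl Ht|p' m g' Hr IH Hp nl Ht] g Hg.
- have [lo_fin _] := learned_epf_endpoints_fin learnedUt Hg.
  apply: contraTneq (induced.1 (lowV g)) => ->.
  by rewrite leeNy_eq; case/fin_numP: lo_fin.
- by apply: step Hr Hp nl (IH _ Hp) _; left.
- by apply: step Hr Hp nl (IH _ Hp) _; right.
Qed.

Lemma fpay_reached {g p mu} : reached G sigma mu0 p mu -> subgame G p = Some g ->
  fpay sigma g p mu = mu.
Proof.
elim/(@game_nth_ind R): g p mu => [r1 r2|b c cs IH] p mu Hr Hp.
  have /andP[le1 le2] := learned_epf_support learnedUt Hp (reached_epf_neqNy Hr Hp).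
  by apply/le_anti; rewrite le1 le2.
have nl : ~~ is_leaf (Node b c cs) by [].
have [[Hi Hj /andP[t_ge0 t_le1] t_mu] _] := induced.2 _ _ _ Hr Hp nl.
have kept a mu' : recommends (sigma p mu) a mu' ->
    fpay sigma (nth c (c :: cs) a) (rcons p a) mu' = mu'.
  move=> rec; have a_lt := recommends_lt (induced.2 _ _ _ Hr Hp nl).1 rec.
  exact: IH a_lt _ _ (reached_child Hr Hp nl rec) (subgame_child Hp a_lt).
rewrite fpay_node // -[RHS]t_mu; congr (_ + _)%R.
  have [->|t_neq0] := eqVneq (ct (sigma p mu)) 0%R; first by rewrite !mul0r.
  by rewrite kept //; left; split; rewrite // lt_neqAle eq_sym t_neq0.
have [->|t_neq1] := eqVneq (ct (sigma p mu)) 1%R; first by rewrite subrr !mul0r.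
by rewrite kept //; right; split; rewrite // lt_neqAle t_neq1.
Qed.

End InducedStrategy.

Theorem theorem2 (R : realType) (G : game R) (Ut : seq nat -> R -> \bar R)
    (mu0 : R) (sigma : seq nat -> R -> choice R) :
  learned_epfs G Ut ->
  induced_strategy G Ut mu0 sigma ->
  forall (p : seq nat) (mu : R) (c : game R) (cs : seq (game R))
         (a : nat) (mu' : R),
    reached G sigma mu0 p mu ->
    subgame G p = Some (Node false c cs) ->
    recommends (sigma p mu) a mu' ->
    tau_ch (Node false c cs) a
      <= (fpay sigma (nth c (c :: cs) a) (rcons p a) mu')%:E.
Proof.
move=> learnedUt induced p mu c cs a mu' Hr Hp rec.
have nl : ~~ is_leaf (Node false c cs) by [].
have max_ch := induced.2 _ _ _ Hr Hp nl.
have a_lt := recommends_lt max_ch.1 rec.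
have /trunc_neqNy[tau_mu' _] := maximizer_recommends_feasible learnedUt Hp nl
  (reached_epf_neqNy learnedUt induced Hr Hp) max_ch rec.
by rewrite (fpay_reached learnedUt induced (reached_child Hr Hp nl rec)
  (subgame_child Hp a_lt)).
Qed.
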